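(* Consider equation (E). Assume that for every $i=1,\dots,m$, $$\liminf_{t\to+\infty}\int_{\tau_i(t)}^{t}p_i(s)\,ds=\beta_i\in\Big(0,\frac1e\Big],$$ and let $\lambda_i^{*}$ be the smallest real root of $e^{\beta_i\lambda}=\lambda$. Assume there exist continuous non-decreasing functions $\sigma_1,\dots,\sigma_m:[t_0,\infty)\to\mathbb{R}$ with $\tau_i(t)\le\sigma_i(t)\le t$ for $t\ge t_0$, $i=1,\dots,m$, such that $$\limsup_{\varepsilon\to0+}\Bigg(\limsup_{t\to+\infty}\prod_{j=1}^{m}\bigg(\prod_{i=1}^{m}\int_{\sigma_j(t)}^{t}p_i(s)\exp\Big(\int_{\tau_i(s)}^{\sigma_i(t)}\sum_{k=1}^{m}(\lambda_k^{*}-\varepsilon)\,p_k(\xi)\,d\xi\Big)ds\bigg)^{1/m}\Bigg)>\frac{1}{m^{m}}.$$ Then all solutions of (E) oscillate.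
   Context: Equation (E) is $x'(t)+\sum_{i=1}^{m}p_i(t)\,x(\tau_i(t))=0$, $t\ge t_0$, where $m\ge1$ is an integer and, for each $i$, $p_i,\tau_i:[t_0,\infty)\to[0,\infty)$ are continuous, $\tau_i(t)\le t$ for $t\ge t_0$, and $\lim_{t\to\infty}\tau_i(t)=\infty$. Let $\tau(t)=\min_i\tau_i(t)$ and $\tau_{(-1)}(t)=\sup\{s:\tau(s)\le t\}$. A solution of (E) is a function $x\in C([T_0,\infty);\mathbb{R})$ for some $T_0\ge t_0$ which is continuously differentiable on $[\tau_{(-1)}(T_0),\infty)$ and satisfies (E) for $t\ge\tau_{(-1)}(T_0)$. A solution is oscillatory if it has arbitrarily large zeros; ''all solutions oscillate'' means every solution is oscillatory. *)

From Stdlib Require Import Reals ClassicalEpsilon.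
Open Scope R_scope.

(* Oriented Riemann integral \int_a^b f (a value; 0 if f is not Riemann
   integrable between a and b -- never the case for the continuous
   integrands of the paper).  RiemannInt does not depend on the proof. *)
Definition Rint (f : R -> R) (a b : R) : R :=
  match excluded_middle_informative (inhabited (Riemann_integrable f a b)) with
  | left h => RiemannInt (epsilon h (fun _ => True))
  | right _ => 0
  end.

(* sumR m f = f 0 + ... + f (m-1);  prodR m f = f 0 * ... * f (m-1).
   Indices i = 1..m of the paper are 0..m-1 here. *)
Fixpoint sumR (m : nat) (f : nat -> R) : R :=
  match m with O => 0 | S k => sumR k f + f k end.
Fixpoint prodR (m : nat) (f : nat -> R) : R :=
  match m with O => 1 | S k => prodR k f * f k end.

Fixpoint minR (n : nat) (f : nat -> R) : R :=
  match n with O => f O | S k => Rmin (minR k f) (f (S k)) end.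

Definition tau_min (m : nat) (tau : nat -> R -> R) (t : R) : R :=
  minR (m - 1) (fun i => tau i t).

Definition rootR (m : nat) (x : R) : R :=
  if Rle_dec x 0 then 0 else Rpower x (/ INR m).

Definition liminf_infty_eq (g : R -> R) (l : R) : Prop :=
  (forall eps, 0 < eps -> exists T, forall t, T <= t -> l - eps < g t) /\
  (forall eps T, 0 < eps -> exists t, T <= t /\ g t < l + eps).

(* limsup_{t -> +oo} g t > c  (limsup in the extended reals) *)
Definition limsup_infty_gt (g : R -> R) (c : R) : Prop :=
  exists c', c < c' /\ forall T, exists t, T <= t /\ c' < g t.

(* limsup_{eps -> 0+} ( limsup_{t -> +oo} F eps t ) > c,
   limsups taken in the extended reals *)
Definition limsup0_limsup_gt (F : R -> R -> R) (c : R) : Prop :=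
  exists c', c < c' /\
    forall d, 0 < d -> exists eps, 0 < eps < d /\ limsup_infty_gt (F eps) c'.

(* x is a solution of (E):  x' (t) + sum_i p_i(t) x(tau_i(t)) = 0.
   T0 is the initial point, T1 = tau_{(-1)}(T0) = sup {s >= t0 : tau(s) <= T0}. *)
Definition is_solution (m : nat) (t0 : R) (p tau : nat -> R -> R)
    (x : R -> R) : Prop :=
  exists T0 T1,
    t0 <= T0 /\
    is_lub (fun s => t0 <= s /\ tau_min m tau s <= T0) T1 /\
    (forall t, T0 <= t -> continuity_pt x t) /\
    (forall t, T1 < t ->
       derivable_pt_lim x t (- sumR m (fun i => p i t * x (tau i t)))).

Definition oscillatory (x : R -> R) : Prop :=
  forall T, exists t, T <= t /\ x t = 0.

Definition thm32_expr (m : nat) (p tau sigma : nat -> R -> R)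
    (lam : nat -> R) (eps t : R) : R :=
  prodR m (fun j =>
    rootR m (prodR m (fun i =>
      Rint (fun s => p i s *
              exp (Rint (fun xi => sumR m (fun k => (lam k - eps) * p k xi))
                        (tau i s) (sigma i t)))
           (sigma j t) t))).

From Stdlib Require Import Reals Lra Lia Classical ClassicalEpsilon.
From Coquelicot Require Import Coquelicot.
Open Scope R_scope.

(* Suppose some solution x does not oscillate.  It has constant sign from some t1 on
   (intermediate value theorem), and -x is again a solution, so we may assume x > 0
   on [t1, +oo).  The argument then runs in three stages (section
   EventuallyPositiveSolution):
   1. Comparison: if x' <= -q x on [b, c] then x(c) exp (int_b^c q) <= x(b).
   2. Bootstrap: with beta_i the liminf of int_{tau_i t}^t p_i and lam_i the smallest
      root of exp (beta_i y) = y, every y < lam_i is eventually a lower bound for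
      x(tau_i t) / x(t); each comparison step raises the ratio alpha to
      exp (c alpha) with c < beta_i, and below lam_i this gains a fixed amount.
   3. Balance: with q = sum_k (lam_k - eps) p_k, integrating (E) over [sigma_j t, t]
      gives  sum_i x(sigma_i t) A_ij <= x(sigma_j t), where A_ij are the integrals of
      the theorem; the AM-GM inequality turns this into  prod_j (prod_i A_ij)^(1/m)
      <= 1/m^m  for all large t, contradicting the limsup hypothesis.
   General facts on integrals, finite sums and products (AM-GM) and on the smallest
   root of exp (beta y) = y come first. *)

Lemma Rint_cases f a b :
  (ex_RInt f a b /\ Rint f a b = RInt f a b) \/ Rint f a b = 0.
Proof.
  unfold Rint. destruct (excluded_middle_informative _) as [[pr] | _]; [left | now right].
  split; [now apply ex_RInt_Reals_1 | symmetry; apply RInt_Reals].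
Qed.

Lemma Rint_RInt f a b : ex_RInt f a b -> Rint f a b = RInt f a b.
Proof.
  intros Hex. unfold Rint. destruct (excluded_middle_informative _) as [h | h].
  - symmetry. apply RInt_Reals.
  - exfalso. apply h. constructor. now apply ex_RInt_Reals_0.
Qed.

Lemma Rint_ge0 f a b :
  a <= b -> (forall s, a <= s <= b -> 0 <= f s) -> 0 <= Rint f a b.
Proof.
  intros Hab Hf. destruct (Rint_cases f a b) as [[Hex ->] | ->]; [| lra].
  apply RInt_ge_0; auto. intros s Hs. apply Hf. lra.
Qed.

Lemma continuous_of_continuity_pt f s : continuity_pt f s -> continuous f s.
Proof. apply continuity_pt_filterlim. Qed.

Lemma ex_RInt_continuity_pt f a b :
  a <= b -> (forall s, a <= s <= b -> continuity_pt f s) -> ex_RInt f a b.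
Proof.
  intros Hab Hf. apply (ex_RInt_continuous (V := R_CompleteNormedModule)).
  rewrite Rmin_left, Rmax_right by lra.
  intros s Hs. apply continuous_of_continuity_pt, Hf, Hs.
Qed.

Lemma RInt_scal_R (f : R -> R) a b c :
  ex_RInt f a b -> RInt (fun s => c * f s) a b = c * RInt f a b.
Proof. apply (RInt_scal (V := R_CompleteNormedModule)). Qed.

(** * Finite sums and products *)

Lemma sumR_ext n f g :
  (forall i, (i < n)%nat -> f i = g i) -> sumR n f = sumR n g.
Proof.
  induction n as [| n IH]; intros H; simpl; [reflexivity |].
  rewrite IH, H by (auto; lia). reflexivity.
Qed.

Lemma sumR_le n f g :
  (forall i, (i < n)%nat -> f i <= g i) -> sumR n f <= sumR n g.
Proof.
  induction n as [| n IH]; intros H; simpl; [lra |].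
  apply Rplus_le_compat; [apply IH; intros; apply H | apply H]; lia.
Qed.

Lemma sumR_ge0 n f : (forall i, (i < n)%nat -> 0 <= f i) -> 0 <= sumR n f.
Proof.
  induction n as [| n IH]; intros H; simpl; [lra |].
  apply Rplus_le_le_0_compat; [apply IH; intros; apply H | apply H]; lia.
Qed.

Lemma sumR_plus n f g : sumR n (fun i => f i + g i) = sumR n f + sumR n g.
Proof. induction n as [| n IH]; simpl; [lra | rewrite IH; lra]. Qed.

Lemma sumR_scal n c f : sumR n (fun i => c * f i) = c * sumR n f.
Proof. induction n as [| n IH]; simpl; [lra | rewrite IH; lra]. Qed.

Lemma sumR_const n c : sumR n (fun _ => c) = INR n * c.
Proof. induction n as [| n IH]; cbn [sumR]; [simpl; lra | rewrite IH, S_INR; lra]. Qed.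

Lemma sumR_term_le n f k :
  (k < n)%nat -> (forall i, (i < n)%nat -> 0 <= f i) -> f k <= sumR n f.
Proof.
  induction n as [| n IH]; intros Hk H; [lia |]. simpl.
  assert (0 <= f n) by (apply H; lia).
  destruct (Nat.eq_dec k n) as [-> | Hkn].
  - assert (0 <= sumR n f) by (apply sumR_ge0; intros; apply H; lia). lra.
  - assert (f k <= sumR n f) by (apply IH; [lia | intros; apply H; lia]). lra.
Qed.

Lemma continuity_pt_sumR n (f : nat -> R -> R) t :
  (forall i, (i < n)%nat -> continuity_pt (f i) t) ->
  continuity_pt (fun s => sumR n (fun i => f i s)) t.
Proof.
  induction n as [| n IH]; intros H; simpl.
  - apply continuity_pt_const. now intros u v.
  - apply (continuity_pt_plus (fun s => sumR n (fun i => f i s)) (f n));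
      [apply IH; intros; apply H | apply H]; lia.
Qed.

Lemma RInt_sumR n (f : nat -> R -> R) a b :
  (forall i, (i < n)%nat -> ex_RInt (f i) a b) ->
  is_RInt (fun s => sumR n (fun i => f i s)) a b (sumR n (fun i => RInt (f i) a b)).
Proof.
  induction n as [| n IH]; intros H; simpl.
  - pose proof (is_RInt_const (V := R_NormedModule) a b 0) as H0.
    change (scal (b - a) (0 : R)) with ((b - a) * 0) in H0.
    now rewrite Rmult_0_r in H0.
  - apply (is_RInt_plus (V := R_NormedModule) (fun s => sumR n (fun i => f i s)) (f n)).
    + apply IH. intros. apply H. lia.
    + apply (RInt_correct (V := R_CompleteNormedModule)). apply H. lia.
Qed.

Lemma prodR_mul n f g : prodR n (fun i => f i * g i) = prodR n f * prodR n g.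
Proof. induction n as [| n IH]; simpl; [lra | rewrite IH; lra]. Qed.

Lemma prodR_const n c : prodR n (fun _ => c) = c ^ n.
Proof. induction n as [| n IH]; simpl; [lra | rewrite IH; lra]. Qed.

Lemma prodR_ge0 n f : (forall i, (i < n)%nat -> 0 <= f i) -> 0 <= prodR n f.
Proof.
  induction n as [| n IH]; intros H; simpl; [lra |].
  apply Rmult_le_pos; [apply IH; intros; apply H | apply H]; lia.
Qed.

Lemma prodR_pos n f : (forall i, (i < n)%nat -> 0 < f i) -> 0 < prodR n f.
Proof.
  induction n as [| n IH]; intros H; simpl; [lra |].
  apply Rmult_lt_0_compat; [apply IH; intros; apply H | apply H]; lia.
Qed.

Lemma prodR_le n f g :
  (forall i, (i < n)%nat -> 0 <= f i <= g i) -> prodR n f <= prodR n g.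
Proof.
  induction n as [| n IH]; intros H; simpl; [lra |].
  apply Rmult_le_compat;
    [apply prodR_ge0; intros; apply H | apply H | apply IH; intros; apply H | apply H]; lia.
Qed.

Lemma prodR_pos_factors n f :
  (forall i, (i < n)%nat -> 0 <= f i) -> 0 < prodR n f ->
  forall i, (i < n)%nat -> 0 < f i.
Proof.
  induction n as [| n IH]; simpl; intros H Hp i Hi; [lia |].
  assert (0 <= prodR n f) by (apply prodR_ge0; intros; apply H; lia).
  assert (0 <= f n) by (apply H; lia).
  assert (0 < prodR n f /\ 0 < f n) as [Hp1 Hp2].
  { split; apply Rnot_le_lt; intros Hle.
    - replace (prodR n f) with 0 in Hp by lra. lra.
    - replace (f n) with 0 in Hp by lra. lra. }
  destruct (Nat.eq_dec i n) as [-> | Hin]; [exact Hp2 |].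
  apply IH; [intros; apply H; lia | exact Hp1 | lia].
Qed.

Lemma ln_prodR n f :
  (forall i, (i < n)%nat -> 0 < f i) -> ln (prodR n f) = sumR n (fun i => ln (f i)).
Proof.
  induction n as [| n IH]; simpl; intros H; [apply ln_1 |].
  rewrite ln_mult, IH; [reflexivity | intros; apply H; lia | | apply H; lia].
  apply prodR_pos. intros. apply H. lia.
Qed.

Lemma rootR_nonneg m y : 0 <= rootR m y.
Proof. unfold rootR. destruct (Rle_dec y 0); [lra | left; apply exp_pos]. Qed.

Lemma rootR_pos m y : 0 < y -> rootR m y = Rpower y (/ INR m).
Proof. intros Hy. unfold rootR. destruct (Rle_dec y 0); [lra | reflexivity]. Qed.

Lemma rootR_mul m y z : 0 < y -> 0 <= z -> rootR m (y * z) = rootR m y * rootR m z.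
Proof.
  intros Hy [Hz | <-].
  - rewrite !rootR_pos by (try apply Rmult_lt_0_compat; lra).
    symmetry. apply Rpower_mult_distr; lra.
  - rewrite Rmult_0_r. unfold rootR. destruct (Rle_dec 0 0); lra.
Qed.

Lemma rootR_pow m y : (1 <= m)%nat -> 0 < y -> rootR m y ^ m = y.
Proof.
  intros Hm Hy. rewrite rootR_pos, <- Rpower_pow, Rpower_mult by (auto; apply exp_pos).
  rewrite Rinv_l by (apply not_0_INR; lia). now apply Rpower_1.
Qed.

(* Arithmetic-geometric mean inequality:  m (a_0 ... a_(m-1))^(1/m) <= a_0 + ... + a_(m-1).
   Proof: with G the geometric mean, sum ln (a_i / G) = 0 and ln u <= u - 1. *)
Lemma amgm m a :
  (1 <= m)%nat -> (forall i, (i < m)%nat -> 0 <= a i) ->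
  INR m * rootR m (prodR m a) <= sumR m a.
Proof.
  intros Hm Ha. destruct (Rle_dec (prodR m a) 0) as [HP | HP].
  { unfold rootR. destruct (Rle_dec _ 0); [| lra].
    rewrite Rmult_0_r. now apply sumR_ge0. }
  apply Rnot_le_lt in HP.
  pose proof (prodR_pos_factors m a Ha HP) as Hai.
  set (G := rootR m (prodR m a)).
  assert (HG : 0 < G) by (unfold G; rewrite rootR_pos by exact HP; apply exp_pos).
  assert (HlnG : INR m * ln G = ln (prodR m a)).
  { unfold G. rewrite rootR_pos by exact HP. unfold Rpower. rewrite ln_exp.
    field. apply not_0_INR. lia. }
  assert (Hterm : forall i, (i < m)%nat -> ln (a i) - ln G <= / G * a i - 1).
  { intros i Hi. pose proof (Hai i Hi).
    rewrite <- ln_div by lra.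
    pose proof (exp_ineq1_le (ln (a i / G))) as He.
    rewrite exp_ln in He by (apply Rdiv_lt_0_compat; lra). unfold Rdiv in He. lra. }
  apply sumR_le in Hterm.
  rewrite (sumR_ext m _ (fun i => ln (a i) + (- ln G))) in Hterm by (intros; ring).
  rewrite (sumR_ext m (fun i => / G * a i - 1) (fun i => / G * a i + (- 1))) in Hterm
    by (intros; ring).
  rewrite !sumR_plus, !sumR_const, sumR_scal, <- ln_prodR in Hterm by exact Hai.
  assert (INR m <= / G * sumR m a) by lra.
  apply Rmult_le_reg_r with (/ G); [now apply Rinv_0_lt_compat |].
  replace (INR m * G * / G) with (INR m) by (field; lra). lra.
Qed.

(* AM-GM on column j gives m G B_j <= X_j, where
   G is the geometric mean of the X_i and B_j = (prod_i A_ij)^(1/m); multiplying over j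
   gives m^m G^m prod_j B_j <= prod_j X_j = G^m. *)
Lemma balance_product_bound m (X : nat -> R) (A : nat -> nat -> R) :
  (1 <= m)%nat ->
  (forall i, (i < m)%nat -> 0 < X i) ->
  (forall i j, (i < m)%nat -> (j < m)%nat -> 0 <= A i j) ->
  (forall j, (j < m)%nat -> sumR m (fun i => X i * A i j) <= X j) ->
  prodR m (fun j => rootR m (prodR m (fun i => A i j))) <= / (INR m ^ m).
Proof.
  intros Hm HX HA Hbal.
  set (B := fun j => rootR m (prodR m (fun i => A i j))).
  set (G := rootR m (prodR m X)).
  assert (HPX : 0 < prodR m X) by now apply prodR_pos.
  assert (HG : 0 < G) by (unfold G; rewrite rootR_pos by exact HPX; apply exp_pos).
  assert (Hcol : forall j, (j < m)%nat -> 0 <= INR m * G * B j <= X j).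
  { intros j Hj. split.
    - apply Rmult_le_pos; [apply Rmult_le_pos; [apply pos_INR | lra] | apply rootR_nonneg].
    - assert (Hamgm : INR m * rootR m (prodR m (fun i => X i * A i j))
                      <= sumR m (fun i => X i * A i j)).
      { apply amgm; [exact Hm |]. intros i Hi. apply Rmult_le_pos; [left |]; auto. }
      rewrite prodR_mul, rootR_mul in Hamgm
        by (auto; apply prodR_ge0; intros; auto).
      pose proof (Hbal j Hj). unfold B, G. lra. }
  apply prodR_le in Hcol.
  rewrite prodR_mul, prodR_const, Rpow_mult_distr in Hcol.
  unfold G in Hcol. rewrite rootR_pow in Hcol by auto.
  assert (Hmm : 0 < INR m ^ m) by (apply pow_lt, lt_0_INR; lia).
  apply Rmult_le_reg_l with (INR m ^ m); [exact Hmm |].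
  rewrite Rinv_r by lra.
  apply Rmult_le_reg_r with (prodR m X); [exact HPX |]. fold B. lra.
Qed.

(** * The smallest root of  exp (beta y) = y *)

Lemma exp_le_compat u v : u <= v -> exp u <= exp v.
Proof. intros [Hlt | ->]; [left; now apply exp_increasing | apply Rle_refl]. Qed.

(* Below the smallest root lam of exp (beta y) = y the gap exp (beta z) - z stays positive:
   it equals 1 at z = 0, so a sign change would produce a smaller root. *)
Lemma gap_below_smallest_root beta lam :
  (forall y, exp (beta * y) = y -> lam <= y) ->
  forall z, 0 <= z < lam -> z < exp (beta * z).
Proof.
  intros Hmin z Hz. apply Rnot_le_lt. intros Hle.
  set (h := fun u => exp (beta * u) - u).
  assert (Hc : continuity h) by (unfold h; reg).
  assert (Hh0 : h 0 = 1) by (unfold h; rewrite Rmult_0_r, exp_0; lra).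
  destruct (IVT_cor h 0 z Hc ltac:(lra)) as [r [Hr Hhr]]; [rewrite Hh0; unfold h; lra |].
  assert (lam <= r) by (apply Hmin; unfold h in Hhr; lra). lra.
Qed.

(* For 0 < beta <= 1/e the gap exp (beta z) - z is nonincreasing on [0, lam]:
   there lam <= e, so its slope beta exp (beta z) - 1 is at most beta e - 1 <= 0. *)
Lemma gap_nonincreasing beta lam :
  0 < beta <= / exp 1 ->
  exp (beta * lam) = lam -> (forall y, exp (beta * y) = y -> lam <= y) ->
  forall y z, 0 <= z <= y -> y < lam -> exp (beta * y) - y <= exp (beta * z) - z.
Proof.
  intros Hb Hl Hmin y z Hz Hy.
  assert (He1 : 0 < exp 1) by apply exp_pos.
  assert (Hbe : beta * exp 1 <= 1).
  { destruct Hb as [_ Hb]. apply Rmult_le_compat_r with (r := exp 1) in Hb; [| lra].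
    rewrite Rinv_l in Hb; lra. }
  assert (Hlam_e : lam <= exp 1).
  { apply Rnot_lt_le. intros Hlt.
    assert (exp 1 < exp (beta * exp 1))
      by (apply (gap_below_smallest_root beta lam Hmin); split; lra).
    assert (exp (beta * exp 1) <= exp 1) by (apply exp_le_compat; lra). lra. }
  assert (Hslope : beta * exp (beta * y) <= 1).
  { assert (exp (beta * y) <= lam)
      by (rewrite <- Hl; apply exp_le_compat, Rmult_le_compat_l; lra).
    apply Rle_trans with (beta * exp 1); [apply Rmult_le_compat_l |]; lra. }
  pose proof (exp_ineq1_le (beta * (z - y))).
  assert (exp (beta * z) = exp (beta * (z - y)) * exp (beta * y))
    by (rewrite <- exp_plus; f_equal; ring).
  pose proof (exp_pos (beta * y)). nra.
Qed.

(* This drives the bootstrap of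
   delay_ratio_below_root: take eta half the gap at y and perturb beta by
   d = eta / (y exp (beta y) + 1). *)
Lemma below_smallest_root beta lam :
  0 < beta <= / exp 1 ->
  exp (beta * lam) = lam -> (forall y, exp (beta * y) = y -> lam <= y) ->
  forall y, 0 <= y < lam ->
  exists c eta, c < beta /\ 0 < eta /\ forall z, 0 <= z <= y -> z + eta <= exp (c * z).
Proof.
  intros Hb Hl Hmin y Hy.
  set (H := exp (beta * y) - y).
  assert (HH : 0 < H) by (pose proof (gap_below_smallest_root beta lam Hmin y Hy); unfold H; lra).
  set (K := exp (beta * y) * y + 1).
  assert (HK : 0 < K) by (unfold K; pose proof (exp_pos (beta * y)); nra).
  set (d := H / (2 * K)).
  assert (Hd : 0 < d) by (unfold d; apply Rdiv_lt_0_compat; lra).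
  assert (HdK : d * K = H / 2) by (unfold d; field; lra).
  exists (beta - d), (H / 2). split; [lra |]. split; [lra |].
  intros z Hz.
  assert (Hsplit : exp ((beta - d) * z) = exp (beta * z) * exp (- (d * z)))
    by (rewrite <- exp_plus; f_equal; ring).
  pose proof (exp_ineq1_le (- (d * z))).
  pose proof (exp_pos (beta * z)).
  assert (exp (beta * z) <= exp (beta * y))
    by (apply exp_le_compat, Rmult_le_compat_l; lra).
  assert (d * z * exp (beta * z) <= d * K).
  { unfold K. assert (z * exp (beta * z) <= y * exp (beta * y))
      by (apply Rmult_le_compat; lra). nra. }
  assert (exp ((beta - d) * z) >= exp (beta * z) * (1 - d * z))
    by (rewrite Hsplit; apply Rle_ge, Rmult_le_compat_l; lra).
  pose proof (gap_nonincreasing beta lam Hb Hl Hmin y z Hz (proj2 Hy)).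
  unfold H in *. nra.
Qed.

Definition for_large (P : R -> Prop) : Prop := exists T, forall t, T <= t -> P t.

Lemma for_large_all (m : nat) (P : nat -> R -> Prop) :
  (forall i, (i < m)%nat -> for_large (P i)) ->
  exists T, forall i t, (i < m)%nat -> T <= t -> P i t.
Proof.
  induction m as [| m IH]; intros H; [exists 0; intros; lia |].
  destruct IH as [T1 H1]; [intros; apply H; lia |].
  destruct (H m ltac:(lia)) as [T2 H2].
  exists (Rmax T1 T2). intros i t Hi Ht.
  pose proof (Rmax_l T1 T2). pose proof (Rmax_r T1 T2).
  destruct (Nat.eq_dec i m) as [-> | Him]; [apply H2 | apply H1]; (lia || lra).
Qed.

(** * Eventually positive solutions of (E) *)

Definition delay_rhs (m : nat) (p tau : nat -> R -> R) (x : R -> R) (t : R) : R :=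
  - sumR m (fun i => p i t * x (tau i t)).

Section EventuallyPositiveSolution.

Variables (m : nat) (p tau : nat -> R -> R) (x : R -> R) (t0 t1 t2 : R).

Hypothesis Hp_cont : forall i t, (i < m)%nat -> t0 <= t -> continuity_pt (p i) t.
Hypothesis Hp_nonneg : forall i t, (i < m)%nat -> t0 <= t -> 0 <= p i t.
Hypothesis Htau_cont : forall i t, (i < m)%nat -> t0 <= t -> continuity_pt (tau i) t.
Hypothesis Htau_le : forall i t, (i < m)%nat -> t0 <= t -> tau i t <= t.
Hypothesis Htau_lim : forall i, (i < m)%nat -> forall M, for_large (fun t => M <= tau i t).

Hypothesis Ht01 : t0 <= t1.
Hypothesis Hx_cont : forall t, t1 <= t -> continuity_pt x t.
Hypothesis Hx_pos : forall t, t1 <= t -> 0 < x t.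
Hypothesis Hx_deriv : forall t, t1 <= t -> derivable_pt_lim x t (delay_rhs m p tau x t).
Hypothesis Ht12 : t1 <= t2.
Hypothesis Hlate : forall i t, (i < m)%nat -> t2 <= t -> t1 <= tau i t.

Lemma delays_eventually_above M :
  exists T, M <= T /\ forall i t, (i < m)%nat -> T <= t -> M <= tau i t.
Proof.
  destruct (for_large_all m (fun i t => M <= tau i t)) as [T HT];
    [intros i Hi; now apply Htau_lim |].
  exists (Rmax T M). split; [apply Rmax_r |].
  intros i t Hi Ht. apply HT; [exact Hi |]. pose proof (Rmax_l T M). lra.
Qed.

Lemma delayed_term_continuous i t :
  (i < m)%nat -> t2 <= t -> continuity_pt (fun s => p i s * x (tau i s)) t.
Proof.
  intros Hi Ht.
  apply (continuity_pt_mult (p i) (fun s => x (tau i s))); [apply Hp_cont; auto; lra |].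
  apply (continuity_pt_comp (tau i) x); [apply Htau_cont; auto; lra |].
  now apply Hx_cont, Hlate.
Qed.

Lemma rhs_continuous t : t2 <= t -> continuity_pt (delay_rhs m p tau x) t.
Proof.
  intros Ht. unfold delay_rhs.
  apply (continuity_pt_opp (fun s => sumR m (fun i => p i s * x (tau i s)))).
  apply (continuity_pt_sumR m (fun i s => p i s * x (tau i s))). intros i Hi.
  now apply delayed_term_continuous.
Qed.

(* Comparison principle: if x' <= - q x on [b, c], then x c * exp (int_b^c q) <= x b.
   (Integrate (ln x)' = x' / x <= - q.) *)
Lemma exp_comparison (q : R -> R) b c :
  t2 <= b <= c -> (forall s, b <= s <= c -> continuity_pt q s) ->
  (forall s, b <= s <= c -> delay_rhs m p tau x s <= - q s * x s) ->
  x c * exp (RInt q b c) <= x b.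
Proof.
  intros Hbc Hq Hrhs.
  assert (Hpos : forall s, b <= s <= c -> 0 < x s) by (intros; apply Hx_pos; lra).
  assert (Hln : is_RInt (fun s => delay_rhs m p tau x s / x s) b c
                  (minus (ln (x c)) (ln (x b)))).
  { apply (is_RInt_derive (fun s => ln (x s)));
      rewrite Rmin_left, Rmax_right by lra; intros s Hs.
    - apply is_derive_Reals.
      replace (delay_rhs m p tau x s / x s) with (/ x s * delay_rhs m p tau x s)
        by (field; apply Rgt_not_eq, Hpos; lra).
      apply (derivable_pt_lim_comp x ln); [apply Hx_deriv; lra |].
      apply derivable_pt_lim_ln, Hpos. lra.
    - apply continuous_of_continuity_pt, continuity_pt_div;
        [apply rhs_continuous | apply Hx_cont | apply Rgt_not_eq, Hpos]; lra. }
  assert (Hexq : ex_RInt q b c) by (apply ex_RInt_continuity_pt; [lra | exact Hq]).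
  assert (Hle : RInt (fun s => delay_rhs m p tau x s / x s) b c <= RInt (fun s => - q s) b c).
  { apply RInt_le; [lra | eexists; exact Hln | |].
    - apply ex_RInt_continuity_pt; [lra |]. intros s Hs. now apply (continuity_pt_opp q), Hq.
    - intros s Hs. specialize (Hpos s ltac:(lra)).
      apply Rmult_le_reg_r with (x s); [exact Hpos |].
      unfold Rdiv. rewrite Rmult_assoc, Rinv_l, Rmult_1_r by lra. apply Hrhs. lra. }
  assert (Hopp : RInt (fun s => - q s) b c = - RInt q b c)
    by exact (RInt_opp (V := R_CompleteNormedModule) q b c Hexq).
  rewrite (is_RInt_unique _ _ _ _ Hln), Hopp in Hle.
  unfold minus, plus, opp in Hle; simpl in Hle.
  assert (Hexp : exp (ln (x c) + RInt q b c) <= exp (ln (x b))) by (apply exp_le_compat; lra).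
  rewrite exp_plus, !exp_ln in Hexp by (apply Hpos; lra). exact Hexp.
Qed.

(* One bootstrap step: if eventually x(tau_i t) >= alpha x(t) and int_{tau_i t}^t p_i >= c,
   then x' <= - alpha p_i x on [tau_i t, t], whence x(tau_i t) >= exp (c alpha) x(t). *)
Lemma delay_ratio_step i alpha c :
  (i < m)%nat -> 0 <= alpha ->
  for_large (fun t => alpha * x t <= x (tau i t)) ->
  for_large (fun t => c <= Rint (p i) (tau i t) t) ->
  for_large (fun t => exp (c * alpha) * x t <= x (tau i t)).
Proof.
  intros Hi Halpha [S HS] [S' HS'].
  destruct (delays_eventually_above (Rmax S t2)) as [T [HT Hdel]].
  exists (Rmax T S'). intros t Ht.
  pose proof (Rmax_l T S'). pose proof (Rmax_r T S').
  pose proof (Rmax_l S t2). pose proof (Rmax_r S t2).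
  set (u := tau i t).
  assert (Hu : Rmax S t2 <= u) by (apply Hdel; auto; lra).
  assert (Hut : u <= t) by (apply Htau_le; auto; lra).
  assert (Hex : ex_RInt (p i) u t)
    by (apply ex_RInt_continuity_pt; [lra | intros; apply Hp_cont; auto; lra]).
  assert (Hcmp : x t * exp (RInt (fun s => alpha * p i s) u t) <= x u).
  { apply exp_comparison; [lra | |].
    - intros s Hs. apply (continuity_pt_scal (p i)), Hp_cont; auto; lra.
    - intros s Hs. unfold delay_rhs.
      assert (p i s * x (tau i s) <= sumR m (fun k => p k s * x (tau k s))).
      { apply (sumR_term_le m (fun k => p k s * x (tau k s))); [exact Hi |].
        intros k Hk. apply Rmult_le_pos; [apply Hp_nonneg; auto; lra |].
        left. apply Hx_pos, Hlate; auto; lra. }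
      assert (alpha * x s <= x (tau i s)) by (apply HS; lra).
      assert (0 <= p i s) by (apply Hp_nonneg; auto; lra).
      nra. }
  rewrite RInt_scal_R in Hcmp by exact Hex.
  assert (c <= RInt (p i) u t) by (rewrite <- Rint_RInt by exact Hex; apply HS'; lra).
  assert (exp (c * alpha) <= exp (alpha * RInt (p i) u t)) by (apply exp_le_compat; nra).
  assert (0 < x t) by (apply Hx_pos; lra).
  nra.
Qed.

(* If beta is the liminf of int_{tau_i t}^t p_i and lam the smallest root of
   exp (beta y) = y, then eventually x(tau_i t) >= y x(t) for every y < lam:
   iterate delay_ratio_step from the ratio 0, gaining at least eta at each step
   (below_smallest_root). *)
Lemma delay_ratio_below_root i beta lam :
  (i < m)%nat ->
  liminf_infty_eq (fun t => Rint (p i) (tau i t) t) beta -> 0 < beta <= / exp 1 ->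
  exp (beta * lam) = lam -> (forall y, exp (beta * y) = y -> lam <= y) ->
  forall y, y < lam -> for_large (fun t => y * x t <= x (tau i t)).
Proof.
  intros Hi [Hliminf _] Hbeta Hlam Hmin y Hy.
  destruct (Rle_or_lt y 0) as [Hy0 | Hy0].
  { exists t2. intros t Ht.
    assert (0 < x t) by (apply Hx_pos; lra).
    assert (0 < x (tau i t)) by (apply Hx_pos, Hlate; auto). nra. }
  destruct (below_smallest_root beta lam Hbeta Hlam Hmin y ltac:(lra))
    as [c [eta [Hc [Heta Hgap]]]].
  assert (Hint : for_large (fun t => c <= Rint (p i) (tau i t) t)).
  { destruct (Hliminf (beta - c) ltac:(lra)) as [S HS].
    exists S. intros t Ht. specialize (HS t Ht). lra. }
  assert (Hboot : forall n, for_large (fun t => Rmin (INR n * eta) y * x t <= x (tau i t))).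
  { induction n as [| n IH].
    - exists t2. intros t Ht. simpl. rewrite Rmult_0_l, Rmin_left by lra.
      assert (0 < x (tau i t)) by (apply Hx_pos, Hlate; auto). lra.
    - set (alpha := Rmin (INR n * eta) y) in IH.
      assert (Halpha : 0 <= alpha <= y).
      { split; [| apply Rmin_r].
        apply Rmin_glb; [apply Rmult_le_pos; [apply pos_INR |] |]; lra. }
      destruct (delay_ratio_step i alpha c Hi (proj1 Halpha) IH Hint) as [T HT].
      exists (Rmax T t1). intros t Ht. pose proof (Rmax_l T t1). pose proof (Rmax_r T t1).
      assert (Hgain : Rmin (INR (S n) * eta) y <= exp (c * alpha)).
      { apply Rle_trans with (alpha + eta); [| apply Hgap; lra].
        rewrite S_INR. unfold alpha, Rmin. repeat destruct Rle_dec; lra. }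
      assert (0 < x t) by (apply Hx_pos; lra).
      apply Rle_trans with (exp (c * alpha) * x t); [apply Rmult_le_compat_r |]; [lra | lra |].
      apply HT. lra. }
  destruct (INR_archimed eta y Heta) as [n Hn].
  destruct (Hboot n) as [T HT]. exists T. intros t Ht.
  specialize (HT t Ht). rewrite Rmin_right in HT by lra. exact HT.
Qed.

(* If eventually x(tau_k t) >= mu_k x(t) for every k, then x' <= - (sum_k mu_k p_k) x
   eventually, and the comparison principle integrates this inequality. *)
Lemma integrated_decay (mu : nat -> R) :
  (forall k, (k < m)%nat -> for_large (fun t => mu k * x t <= x (tau k t))) ->
  exists T, t2 <= T /\ forall u v, T <= u <= v ->
    x v * exp (Rint (fun s => sumR m (fun k => mu k * p k s)) u v) <= x u.
Proof.
  intros Hmu. destruct (for_large_all m _ Hmu) as [T HT].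
  exists (Rmax T t2). split; [apply Rmax_r |]. intros u v Huv.
  pose proof (Rmax_l T t2). pose proof (Rmax_r T t2).
  set (q := fun s => sumR m (fun k => mu k * p k s)).
  assert (Hq : forall s, t0 <= s -> continuity_pt q s).
  { intros s Hs. apply (continuity_pt_sumR m (fun k s => mu k * p k s)). intros k Hk.
    apply (continuity_pt_scal (p k)), Hp_cont; auto. }
  rewrite Rint_RInt by (apply ex_RInt_continuity_pt; [lra | intros; apply Hq; lra]).
  apply exp_comparison; [lra | intros; apply Hq; lra |].
  intros s Hs.
  assert (Hsum : sumR m (fun k => x s * (mu k * p k s))
                 <= sumR m (fun k => p k s * x (tau k s))).
  { apply sumR_le. intros k Hk.
    assert (0 <= p k s) by (apply Hp_nonneg; auto; lra).
    assert (mu k * x s <= x (tau k s)) by (apply HT; auto; lra). nra. }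
  rewrite sumR_scal in Hsum. unfold delay_rhs, q. lra.
Qed.

(* Integrating (E) over [u, t] and bounding each delayed value by the decay estimate:
     sum_i x(r_i) int_u^t p_i(s) exp (int_{tau_i s}^{r_i} q) ds <= x(u) - x(t) <= x(u),
   provided T <= tau_i(s) <= r_i for s in [u, t]. *)
Lemma weighted_balance (q : R -> R) (T u t : R) (r : nat -> R) :
  t2 <= T -> (forall v w, T <= v <= w -> x w * exp (Rint q v w) <= x v) ->
  T <= u <= t -> (forall i s, (i < m)%nat -> u <= s <= t -> T <= tau i s <= r i) ->
  sumR m (fun i => x (r i) * Rint (fun s => p i s * exp (Rint q (tau i s) (r i))) u t)
  <= x u.
Proof.
  intros HT Hdecay Hut Hr.
  set (f := fun i s => p i s * x (tau i s)).
  assert (Hexf : forall i, (i < m)%nat -> ex_RInt (f i) u t).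
  { intros i Hi. apply ex_RInt_continuity_pt; [lra |].
    intros s Hs. apply delayed_term_continuous; [exact Hi | lra]. }
  assert (Hftc : x u - x t = sumR m (fun i => RInt (f i) u t)).
  { assert (H1 : is_RInt (delay_rhs m p tau x) u t (minus (x t) (x u))).
    { apply (is_RInt_derive x); rewrite Rmin_left, Rmax_right by lra; intros s Hs.
      - apply is_derive_Reals, Hx_deriv. lra.
      - apply continuous_of_continuity_pt, rhs_continuous. lra. }
    assert (H2 : is_RInt (delay_rhs m p tau x) u t
                   (opp (sumR m (fun i => RInt (f i) u t)))).
    { apply (is_RInt_opp (V := R_NormedModule) (fun s => sumR m (fun i => f i s))).
      now apply RInt_sumR. }
    apply (is_RInt_unique (V := R_CompleteNormedModule)) in H1.
    apply (is_RInt_unique (V := R_CompleteNormedModule)) in H2.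
    rewrite H1 in H2. unfold minus, plus, opp in H2; simpl in H2. lra. }
  assert (Hterm : forall i, (i < m)%nat ->
            x (r i) * Rint (fun s => p i s * exp (Rint q (tau i s) (r i))) u t
            <= RInt (f i) u t).
  { intros i Hi.
    assert (Hpt : forall s, u <= s <= t ->
              x (r i) * (p i s * exp (Rint q (tau i s) (r i))) <= f i s).
    { intros s Hs. unfold f. destruct (Hr i s Hi Hs).
      assert (0 <= p i s) by (apply Hp_nonneg; auto; lra).
      assert (x (r i) * exp (Rint q (tau i s) (r i)) <= x (tau i s)) by (apply Hdecay; lra).
      nra. }
    destruct (Rint_cases (fun s => p i s * exp (Rint q (tau i s) (r i))) u t)
      as [[Hex ->] | ->].
    - rewrite <- RInt_scal_R by exact Hex.
      apply RInt_le; [lra | | apply Hexf, Hi | intros s Hs; apply Hpt; lra].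
      exact (ex_RInt_scal (V := R_NormedModule) _ u t (x (r i)) Hex).
    - rewrite Rmult_0_r. apply RInt_ge_0; [lra | apply Hexf, Hi |].
      intros s Hs. unfold f. destruct (Hr i s Hi ltac:(lra)).
      apply Rmult_le_pos; [apply Hp_nonneg; auto; lra | left; apply Hx_pos; lra]. }
  apply sumR_le in Hterm.
  assert (0 < x t) by (apply Hx_pos; lra). lra.
Qed.

Variable sigma : nat -> R -> R.
Hypothesis Hsig_mono : forall i s t, (i < m)%nat -> t0 <= s -> s <= t ->
  sigma i s <= sigma i t.
Hypothesis Hsig_bounds : forall i t, (i < m)%nat -> t0 <= t -> tau i t <= sigma i t <= t.

(* If every lam_k - eps is an eventual lower bound for x(tau_k t) / x(t), then the
   quantity of the theorem is at most 1/m^m for all large t: weighted_balance with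
   r_i = sigma_i(t) on [sigma_j(t), t] gives the hypothesis of balance_product_bound. *)
Lemma theorem_expr_eventually_bounded (lam : nat -> R) eps :
  (1 <= m)%nat ->
  (forall k, (k < m)%nat -> for_large (fun t => (lam k - eps) * x t <= x (tau k t))) ->
  for_large (fun t => thm32_expr m p tau sigma lam eps t <= / (INR m ^ m)).
Proof.
  intros Hm Hratio.
  destruct (integrated_decay (fun k => lam k - eps) Hratio) as [T [HT Hdecay]].
  destruct (delays_eventually_above T) as [T' [HT' HdelT]].
  destruct (delays_eventually_above T') as [T'' [HT'' HdelT']].
  exists T''. intros t Ht.
  assert (Hsig : forall j, (j < m)%nat -> T' <= sigma j t <= t).
  { intros j Hj. pose proof (HdelT' j t Hj Ht).
    pose proof (Hsig_bounds j t Hj ltac:(lra)). lra. }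
  apply balance_product_bound with (X := fun i => x (sigma i t)); [exact Hm | | |].
  - intros i Hi. apply Hx_pos. pose proof (Hsig i Hi). lra.
  - intros i j Hi Hj. apply Rint_ge0; [apply Hsig, Hj |]. intros s Hs.
    pose proof (Hsig j Hj).
    apply Rmult_le_pos; [apply Hp_nonneg; auto; lra | left; apply exp_pos].
  - intros j Hj. pose proof (Hsig j Hj).
    apply (weighted_balance (fun s => sumR m (fun k => (lam k - eps) * p k s)) T
             (sigma j t) t (fun i => sigma i t)); [exact HT | exact Hdecay | lra |].
    intros i s Hi Hs. split; [apply HdelT; auto; lra |].
    apply Rle_trans with (sigma i s); [apply Hsig_bounds | apply Hsig_mono]; auto; lra.
Qed.

Lemma no_eventually_positive_solution (beta lam : nat -> R) :
  (1 <= m)%nat ->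
  (forall i, (i < m)%nat ->
     liminf_infty_eq (fun t => Rint (p i) (tau i t) t) (beta i) /\
     0 < beta i <= / exp 1) ->
  (forall i, (i < m)%nat ->
     exp (beta i * lam i) = lam i /\ forall y, exp (beta i * y) = y -> lam i <= y) ->
  limsup0_limsup_gt (thm32_expr m p tau sigma lam) (/ (INR m ^ m)) ->
  False.
Proof.
  intros Hm Hbeta Hlam [c [Hc Hlimsup]].
  destruct (Hlimsup 1 Rlt_0_1) as [eps [[Heps _] [c' [Hc' Hoften]]]].
  destruct (theorem_expr_eventually_bounded lam eps Hm) as [T HT].
  { intros k Hk. destruct (Hbeta k Hk) as [Hliminf Hb]. destruct (Hlam k Hk) as [Hroot Hmin].
    apply (delay_ratio_below_root k (beta k) (lam k)); auto. lra. }
  destruct (Hoften T) as [t [Ht Hgt]]. specialize (HT t Ht). lra.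
Qed.

End EventuallyPositiveSolution.

Lemma zero_free_constant_sign (y : R -> R) a :
  (forall t, a <= t -> continuity_pt y t) -> (forall t, a <= t -> y t <> 0) ->
  (forall t, a <= t -> 0 < y t) \/ (forall t, a <= t -> 0 < - y t).
Proof.
  intros Hc Hnz.
  assert (Hkeep : forall f, (forall t, a <= t -> continuity_pt f t) ->
            (forall t, a <= t -> f t <> 0) -> f a < 0 -> forall t, a <= t -> f t < 0).
  { intros f Hfc Hfnz Hfa t Ht. apply Rnot_le_lt. intros Hft.
    assert (0 < f t) by (pose proof (Hfnz t Ht); lra).
    assert (a < t) by (destruct (Req_dec a t) as [<- |]; lra).
    destruct (Ranalysis5.IVT_interv f a t) as [z [Hz Hfz]]; auto; [intros; apply Hfc; lra |].
    apply (Hfnz z); [lra | exact Hfz]. }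
  destruct (Rlt_or_le (y a) 0) as [Hya | Hya].
  - right. intros t Ht. pose proof (Hkeep y Hc Hnz Hya t Ht). lra.
  - left. intros t Ht.
    assert (Hopp_c : forall s, a <= s -> continuity_pt (fun u => - y u) s)
      by (intros; now apply (continuity_pt_opp y), Hc).
    assert (Hopp_nz : forall s, a <= s -> - y s <> 0)
      by (intros s Hs; pose proof (Hnz s Hs); lra).
    assert (Hopp_a : - y a < 0) by (pose proof (Hnz a (Rle_refl a)); lra).
    pose proof (Hkeep (fun u => - y u) Hopp_c Hopp_nz Hopp_a t Ht). simpl in *. lra.
Qed.

Lemma derivable_delay_rhs_opp m p tau x t :
  derivable_pt_lim x t (delay_rhs m p tau x t) ->
  derivable_pt_lim (fun s => - x s) t (delay_rhs m p tau (fun s => - x s) t).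
Proof.
  intros Hd. replace (delay_rhs m p tau (fun s => - x s) t) with (- delay_rhs m p tau x t).
  - now apply (derivable_pt_lim_opp x).
  - unfold delay_rhs.
    rewrite (sumR_ext m (fun i => p i t * - x (tau i t)) (fun i => -1 * (p i t * x (tau i t))))
      by (intros; ring).
    rewrite sumR_scal. ring.
Qed.

Theorem theorem3p2 (m : nat) (t0 : R) (p tau : nat -> R -> R)
  (beta lam : nat -> R) (sigma : nat -> R -> R)
  (Hm : (1 <= m)%nat)
  (Hp_cont : forall i t, (i < m)%nat -> t0 <= t -> continuity_pt (p i) t)
  (Hp_nonneg : forall i t, (i < m)%nat -> t0 <= t -> 0 <= p i t)
  (Htau_cont : forall i t, (i < m)%nat -> t0 <= t -> continuity_pt (tau i) t)
  (Htau_nonneg : forall i t, (i < m)%nat -> t0 <= t -> 0 <= tau i t)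
  (Htau_le : forall i t, (i < m)%nat -> t0 <= t -> tau i t <= t)
  (Htau_lim : forall i, (i < m)%nat ->
     forall M, exists T, forall t, T <= t -> M <= tau i t)
  (Hbeta : forall i, (i < m)%nat ->
     liminf_infty_eq (fun t => Rint (p i) (tau i t) t) (beta i) /\
     0 < beta i <= / exp 1)
  (Hlam : forall i, (i < m)%nat ->
     exp (beta i * lam i) = lam i /\
     forall y, exp (beta i * y) = y -> lam i <= y)
  (Hsig_cont : forall i t, (i < m)%nat -> t0 <= t -> continuity_pt (sigma i) t)
  (Hsig_mono : forall i s t, (i < m)%nat -> t0 <= s -> s <= t ->
     sigma i s <= sigma i t)
  (Hsig_bounds : forall i t, (i < m)%nat -> t0 <= t ->
     tau i t <= sigma i t <= t)
  (Hmain : limsup0_limsup_gt (thm32_expr m p tau sigma lam)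
             (/ (INR m ^ m))) :
  forall x : R -> R, is_solution m t0 p tau x -> oscillatory x.
Proof.
  intros x [T0 [T1 [HT0 [_ [Hx_cont Hx_deriv]]]]] T.
  apply NNPP. intros Hno_zero.
  set (t1 := Rmax (Rmax T T0) (T1 + 1)).
  assert (Ht1 : T <= t1 /\ T0 <= t1 /\ T1 < t1).
  { pose proof (Rmax_l (Rmax T T0) (T1 + 1)). pose proof (Rmax_r (Rmax T T0) (T1 + 1)).
    pose proof (Rmax_l T T0). pose proof (Rmax_r T T0). unfold t1. lra. }
  destruct (delays_eventually_above m tau Htau_lim t1) as [t2 [Ht12 Hlate]].
  assert (Hno_positive : forall y, (forall t, t1 <= t -> continuity_pt y t) ->
            (forall t, t1 <= t -> 0 < y t) ->
            (forall t, t1 <= t -> derivable_pt_lim y t (delay_rhs m p tau y t)) -> False).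
  { intros y Hy_cont Hy_pos Hy_deriv.
    exact (no_eventually_positive_solution m p tau y t0 t1 t2 Hp_cont Hp_nonneg
             Htau_cont Htau_le Htau_lim ltac:(lra) Hy_cont Hy_pos Hy_deriv Ht12 Hlate
             sigma Hsig_mono Hsig_bounds beta lam Hm Hbeta Hlam Hmain). }
  destruct (zero_free_constant_sign x t1) as [Hpos | Hneg].
  - intros t Ht. apply Hx_cont. lra.
  - intros t Ht Hzero. apply Hno_zero. exists t. split; [lra | exact Hzero].
  - apply (Hno_positive x); [| exact Hpos |]; intros t Ht; [apply Hx_cont | apply Hx_deriv]; lra.
  - apply (Hno_positive (fun s => - x s)); [| exact Hneg |]; intros t Ht.
    + apply (continuity_pt_opp x), Hx_cont. lra.
    + apply derivable_delay_rhs_opp, Hx_deriv. lra.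
Qed.
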